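(* There is a neighborhood $U_0$ of $(0,0)\in\mathbb{R}^k\times\mathbb{R}^{n-k}$ and a neighborhood $U_1$ of $p_0\in\mathcal{O}$ such that $$G:U_0\longrightarrow U_1$$ is a Lipschitz homeomorphism, with Lipschitz inverse.
   Context: Let $\Omega$ be a manifold of dimension $n$ and $\mathcal{E}\subset T\Omega$ a Lipschitz subbundle of fiber dimension $k<n$ which is involutive (brackets of Lipschitz sections are $L^\infty$ sections of $\mathcal{E}$). Fix $p_0\in\Omega$ and coordinates $x\in\mathbb{R}^n$ centered at $p_0=0$ on a neighborhood $\mathcal{O}$, in which $\mathcal{E}$ is spanned by Lipschitz vector fields of the form $$Y_i=\partial_i+\sum_{\ell\ge k+1} D_{i\ell}(x)\,\partial_\ell,\quad 1\le i\le k,$$ with $D_{i\ell}$ Lipschitz and $D_{i\ell}(0)=0$, and satisfying $[Y_i,Y_j]=0$ for $1\le i,j\le k$. For such commuting Lipschitz vector fields the local flows $\mathcal{F}^{t_j}_{Y_j}$ commute, and $y(t,x)=\mathcal{F}^{t_1}_{Y_1}\circ\cdots\circ\mathcal{F}^{t_k}_{Y_k}(x)$ is the unique solution of $\partial y/\partial t_j=Y_j(y)$, $y(0,x)=x$, defined for $|t_j|<\delta$ and $x$ in a compact subset, and is Lipschitz in $(t,x)$. Write $\mathcal{F}^t=\mathcal{F}^{t_1}_{Y_1}\circ\cdots\circ\mathcal{F}^{t_k}_{Y_k}$ and, for $z$ close to $0$ in $\mathbb{R}^{n-k}$ and $|t|<\delta$, define $$G(t,z)=y(t,0,z)=\mathcal{F}^t(0,z).$$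 *)

From HB Require Import structures.
From mathcomp Require Import all_boot all_order all_algebra.
From mathcomp Require Import all_classical all_reals all_analysis.
Set Implicit Arguments. Unset Strict Implicit. Unset Printing Implicit Defensive.
Import Order.TTheory GRing.Theory Num.Theory.
Import numFieldNormedType.Exports.
Local Open Scope classical_set_scope.
Local Open Scope ring_scope.

(* Coordinates on R^n with n = k + m (m = n - k >= 1).  A point is a row
   vector 'rV_(k+m); its first k coordinates are x_1..x_k, the last m are
   x_{k+1}..x_n.  The vector field
     Y_i = \partial_i + \sum_{l >= k+1} D_{il}(x) \partial_l
   is represented by its coefficient vector; D i l is D_{i,k+1+l}. *)
Definition Yfield (R : realType) (k m : nat)
  (D : 'I_k -> 'I_m -> 'rV[R]_(k + m) -> R) (i : 'I_k) (p : 'rV[R]_(k + m))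
  : 'rV[R]_(k + m) :=
  row_mx (delta_mx 0 i) (\row_(l < m) D i l p).

Definition Gmap (R : realType) (k m : nat)
  (y : 'rV[R]_k -> 'rV[R]_(k + m) -> 'rV[R]_(k + m))
  (p : 'rV[R]_k * 'rV[R]_m) : 'rV[R]_(k + m) :=
  y p.1 (row_mx 0 p.2).

From HB Require Import structures.
From mathcomp Require Import all_boot all_order all_algebra.
From mathcomp Require Import all_classical all_reals all_analysis.
From mathcomp Require Import ring lra.
Set Implicit Arguments. Unset Strict Implicit. Unset Printing Implicit Defensive.
Import Order.TTheory GRing.Theory Num.Theory.
Import numFieldNormedType.Exports.
Local Open Scope classical_set_scope.
Local Open Scope ring_scope.

(* In the coordinates (t, z), each Y_j has the constant first block e_j, so
   integrating along a staircase of coordinate segments gives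
   lsubmx (y t x) = lsubmx x + t: hence G (t, z) = (t, g (t, z)).  Since D is
   Ld-Lipschitz and the flow is Ly-Lipschitz, the same integration gives
   |g (t, z) - g (t, z') - (z - z')| <= k Ld Ly |t| |z - z'|.  On a box of small
   radius, z |-> g (t, z) is thus a 1/2-perturbation of the identity: G expands
   distances by at most 2 (1 + Ly), so it is injective with a Lipschitz
   inverse, and by the contraction mapping principle its image contains a ball
   around 0. *)

Section row_vector_norm.
Variable R : realDomainType.

Lemma rV_norm_le n (v : 'rV[R]_n) (C : R) :
  0 <= C -> (forall i, `|v 0 i| <= C) -> `|v| <= C.
Proof.
move=> C0 vC; rewrite [`|v|]/Num.Def.normr /= mx_normrE; apply/bigmax_leP.
by split=> // -[a b] _ /=; rewrite (ord1 a).
Qed.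

Lemma rV_coord_le_norm n (v : 'rV[R]_n) i : `|v 0 i| <= `|v|.
Proof.
rewrite [`|v|]/Num.Def.normr /= mx_normrE; apply/bigmax_geP; right => /=.
by exists (0, i).
Qed.

Lemma lsubmx_norm_le k m (v : 'rV[R]_(k + m)) : `|lsubmx v| <= `|v|.
Proof. by apply: rV_norm_le => // i; rewrite mxE; exact: rV_coord_le_norm. Qed.

Lemma rsubmx_norm_le k m (v : 'rV[R]_(k + m)) : `|rsubmx v| <= `|v|.
Proof. by apply: rV_norm_le => // i; rewrite mxE; exact: rV_coord_le_norm. Qed.

Lemma norm_row_mx0 k m (z : 'rV[R]_m) : `|row_mx (0 : 'rV[R]_k) z| = `|z|.
Proof.
apply/eqP; rewrite eq_le; apply/andP; split; last first.
  by have := rsubmx_norm_le (row_mx (0 : 'rV[R]_k) z); rewrite row_mxKr.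
apply: rV_norm_le => // i; case: (split_ordP i) => j ->.
  by rewrite row_mxEl mxE normr0.
by rewrite row_mxEr rV_coord_le_norm.
Qed.

End row_vector_norm.

Section derivative_lemmas.
Variable R : realType.

Lemma is_derive_mx_entry (V : normedModType R) p q (F : V -> 'M[R]_(p, q))
    x v (dF : 'M[R]_(p, q)) i j :
  is_derive x v F dF -> is_derive x v (fun y => F y i j) (dF i j).
Proof.
move=> [dFx <-].
have cvF : (fun h : R => h^-1 *: (((fun y => F y i j) \o shift x) (h *: v) - F x i j))
    @ 0^' --> ('D_v F x) i j.
  have -> : (fun h : R => h^-1 *: (((fun y => F y i j) \o shift x) (h *: v) - F x i j))
      = (fun M : 'M[R]_(p, q) => M i j) \o
        (fun h : R => h^-1 *: ((F \o shift x) (h *: v) - F x)).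
    by apply/funext => h /=; rewrite !mxE.
  by apply: continuous_cvg; [exact: coord_continuous | exact: dFx].
by split; [apply/cvg_ex; exists (('D_v F x) i j) | exact: cvg_lim].
Qed.

Lemma is_derive_along_line k (W : normedModType R) (f : 'rV[R]_k -> W) a e s df :
  is_derive (a + s *: e) e f df -> is_derive s 1 (fun u : R => f (a + u *: e)) df.
Proof.
move=> [dfx <-].
have E : (fun h : R => h^-1 *: (((fun u : R => f (a + u *: e)) \o shift s) (h *: 1)
             - f (a + s *: e)))
  = (fun h : R => h^-1 *: ((f \o shift (a + s *: e)) (h *: e) - f (a + s *: e))).
  apply/funext => h /=; congr (_ *: (f _ - _)).
  by rewrite /shift /= -[h%:A]/(h * 1) mulr1 scalerDl addrCA addrC.
by split; rewrite /derivable /derive E.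
Qed.

Lemma MVT_bound_le (f df : R -> R) (v C a b : R) : a <= b ->
  (forall x, a <= x <= b -> is_derive x 1 f (df x) /\ `|df x - v| <= C) ->
  `|f b - f a - v * (b - a)| <= C * (b - a).
Proof.
move=> ab fab.
have g_der x : a <= x <= b -> is_derive x 1 (f - v \*: id) (df x - v *: 1).
  by move=> /fab[fx _]; apply: is_deriveB.
have -> : f b - f a - v * (b - a) = (f - v \*: id) b - (f - v \*: id) a.
  by rewrite /= !fctE /= -[v *: b]/(v * b) -[v *: a]/(v * a); ring.
have [c cab ->] : exists2 c, c \in `[a, b] &
    (f - v \*: id) b - (f - v \*: id) a = (df c - v *: 1) * (b - a).
  apply: MVT_segment => // [x|].
    by rewrite in_itv /= => /andP[ax xb]; apply: g_der; rewrite !ltW.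
  apply: derivable_within_continuous => x; rewrite in_itv /= => xab.
  by have [] := g_der x xab.
rewrite -[v *: 1]/(v * 1) mulr1 normrM [`|b - a|]ger0_norm ?subr_ge0 //.
rewrite ler_wpM2r ?subr_ge0 //.
by move: cab; rewrite in_itv /= => /fab[].
Qed.

Lemma MVT_bound (f df : R -> R) (v C a b : R) :
  (forall x, Num.min a b <= x <= Num.max a b ->
     is_derive x 1 f (df x) /\ `|df x - v| <= C) ->
  `|f b - f a - v * (b - a)| <= C * `|b - a|.
Proof.
have [ab|/ltW ba] := leP a b => fab.
  rewrite [`|b - a|]ger0_norm ?subr_ge0 //.
  exact: (MVT_bound_le ab fab).
rewrite -normrN distrC [`|a - b|]ger0_norm ?subr_ge0 //.
have -> : - (f b - f a - v * (b - a)) = f a - f b - v * (a - b) by ring.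
exact: (MVT_bound_le ba fab).
Qed.

End derivative_lemmas.

Section staircase.
Variables (R : realType) (k : nat).
Implicit Types (t : 'rV[R]_k) (j : nat).

Definition stair t j : 'rV[R]_k := \row_i (if (i < j)%N then t 0 i else 0).

Lemma stair0 t : stair t 0 = 0.
Proof. by apply/rowP => i; rewrite !mxE. Qed.

Lemma stair_full t : stair t k = t.
Proof. by apply/rowP => i; rewrite !mxE ltn_ord. Qed.

Lemma stairS t j (jk : (j < k)%N) :
  stair t j.+1 = stair t j + t 0 (Ordinal jk) *: delta_mx 0 (Ordinal jk).
Proof.
apply/rowP => i; rewrite !mxE eqxx /= ltnS leq_eqVlt.
have [ij|ij] := eqVneq i (Ordinal jk); first by rewrite ij /= eqxx ltnn add0r mulr1.
have /negbTE -> : nat_of_ord i != j by apply: contra ij => /eqP ij; exact/eqP/val_inj.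
by rewrite mulr0 addr0.
Qed.

Lemma normr_le_between0 (b s : R) :
  Num.min 0 b <= s <= Num.max 0 b -> `|s| <= `|b|.
Proof.
have [b0|/ltW b0] := leP 0 b => /andP[s1 s2].
  by rewrite !ger0_norm // (le_trans s1 s2).
by rewrite !ler0_norm // ?lerN2 // (le_trans s1 s2).
Qed.

Lemma norm_stair_step_le t j (jk : (j < k)%N) s :
  `|s| <= `|t 0 (Ordinal jk)| ->
  `|stair t j + s *: delta_mx 0 (Ordinal jk)| <= `|t|.
Proof.
move=> st; apply: rV_norm_le => // i; rewrite !mxE eqxx /=.
have [->|ij] := eqVneq i (Ordinal jk).
  by rewrite /= ltnn add0r mulr1 (le_trans st) // rV_coord_le_norm.
rewrite mulr0 addr0; case: ifP => _; last by rewrite normr0.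
exact: rV_coord_le_norm.
Qed.

(* Mean value inequality along the staircase 0 = stair t 0, ..., stair t k = t,
   whose j-th segment is parallel to the j-th coordinate axis. *)
Lemma stair_mvt n (F : 'rV[R]_k -> 'rV[R]_n) (dF : 'rV[R]_k -> 'I_k -> 'rV[R]_n)
    c (v : 'I_k -> R) (C delta : R) t :
  0 <= C -> `|t| < delta ->
  (forall s i, `|s| < delta ->
     is_derive s (delta_mx 0 i) F (dF s i) /\ `|dF s i 0 c - v i| <= C) ->
  `|F t 0 c - F 0 0 c - \sum_i v i * t 0 i| <= k%:R * `|t| * C.
Proof.
move=> C0 tdelta dFv.
suff stair_bound j : (j <= k)%N ->
    `|F (stair t j) 0 c - F 0 0 c - \sum_i v i * stair t j 0 i| <= j%:R * `|t| * C.
  by have := stair_bound k (leqnn k); rewrite stair_full.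
elim: j => [_|j IH jk].
  by rewrite stair0 big1 ?subr0 ?subrr ?normr0 ?mul0r // => i _; rewrite mxE mulr0.
set jo := Ordinal jk; set e := delta_mx 0 jo : 'rV[R]_k.
pose f u := F (stair t j + u *: e) 0 c.
have step : `|f (t 0 jo) - f 0 - v jo * (t 0 jo - 0)| <= C * `|t 0 jo - 0|.
  apply: (MVT_bound (df := fun u => dF (stair t j + u *: e) jo 0 c)) => u.
  move=> /normr_le_between0 /(norm_stair_step_le (jk := jk)) /le_lt_trans /(_ tdelta) ut.
  have [Fder dFle] := dFv _ jo ut.
  by split=> //; apply: is_derive_mx_entry; exact: is_derive_along_line.
have sum_step : \sum_i v i * stair t j.+1 0 i =
    \sum_i v i * stair t j 0 i + v jo * t 0 jo.
  rewrite (stairS t jk) -/e.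
  under eq_bigr do rewrite [(stair t j + _) _ _]mxE mulrDr.
  rewrite big_split /=; congr (_ + _); rewrite (bigD1 jo) //= big1 => [|i ij].
    by rewrite /e !mxE !eqxx mulr1 addr0.
  by rewrite /e !mxE (negbTE ij) andbF !mulr0.
rewrite sum_step (stairS t jk) -/e.
have -> : F (stair t j + t 0 jo *: e) 0 c - F 0 0 c -
    (\sum_i v i * stair t j 0 i + v jo * t 0 jo) =
    (f (t 0 jo) - f 0 - v jo * (t 0 jo - 0)) +
    (F (stair t j) 0 c - F 0 0 c - \sum_i v i * stair t j 0 i).
  by rewrite /f scale0r addr0 subr0; ring.
apply: le_trans (ler_normD _ _) _.
rewrite -nat1r !mulrDl mul1r.
apply: lerD; last exact: IH (ltnW jk).
apply: le_trans step _.
by rewrite subr0 mulrC ler_wpM2r // rV_coord_le_norm.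
Qed.

End staircase.

Section lipschitz_bounds.
Variables (R : realType) (V W : normedModType R).
Implicit Types (A : set V) (f : V -> W).

Lemma lipschitz_on_bound A f : [lipschitz f x | x in A] ->
  exists2 L, 0 <= L & forall x x', A x -> A x' -> `|f x - f x'| <= L * `|x - x'|.
Proof.
move=> /pinfty_ex_gt0[L /ltW L0 fL]; exists L => // x x' Ax Ax'.
exact: (fL (x, x')).
Qed.

Lemma lipschitz_on_bound_fam (I : finType) A (f : I -> V -> W) :
  (forall i, [lipschitz f i x | x in A]) ->
  exists2 L, 0 <= L & forall i x x', A x -> A x' -> `|f i x - f i x'| <= L * `|x - x'|.
Proof.
move=> /filter_forall/pinfty_ex_gt0[L /ltW L0 fL]; exists L => // i x x' Ax Ax'.
exact: (fL i (x, x')).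
Qed.

Lemma lipschitz_on_of_bound A f (L : R) :
  (forall x x', A x -> A x' -> `|f x - f x'| <= L * `|x - x'|) ->
  [lipschitz f x | x in A].
Proof.
move=> fL; rewrite /lipschitz_on; near=> M => -[x x'] [/= Ax Ax'].
apply: le_trans (fL _ _ Ax Ax') _; rewrite ler_wpM2r //.
Unshelve. all: by end_near. Qed.

Lemma continuous_within_of_bound A f (L : R) : 0 <= L ->
  (forall x x', A x -> A x' -> `|f x - f x'| <= L * `|x - x'|) ->
  {within A, continuous f}.
Proof.
move=> L0 fL; apply/subspace_continuousP => x Ax.
apply/cvgrPdist_lt => e e0; have L1 : 0 < L + 1 by rewrite ltr_wpDl.
rewrite near_withinE; near=> x' => Ax'.
have : `|x - x'| < e / (L + 1) by near: x'; apply: cvgr_dist_lt => //; rewrite divr_gt0.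
rewrite ltr_pdivlMr // => xx'; apply: le_lt_trans (fL _ _ Ax Ax') (le_lt_trans _ xx').
by rewrite mulrC ler_wpM2l // lerDl.
Unshelve. all: by end_near. Qed.

End lipschitz_bounds.

Lemma closed_ball_fixed_point (R : realType) (V : completeNormedModType R)
    (Phi : V -> V) (rho c : R) :
  0 < rho -> 0 <= c < 1 ->
  (forall z, `|z| <= rho -> `|Phi z| <= rho) ->
  (forall z z', `|z| <= rho -> `|z'| <= rho -> `|Phi z - Phi z'| <= c * `|z - z'|) ->
  exists2 z, `|z| <= rho & Phi z = z.
Proof.
move=> rho0 /andP[c0 c1] Phi_ball Phi_contr.
pose B := [set z : V | `|z| <= rho].
have B_closed : closed B.
  rewrite (_ : B = closed_ball 0 rho); first exact: closed_ball_closed.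
  by rewrite closed_ballE //; apply/funext => z; rewrite /B /closed_ball_ /= sub0r normrN.
pose f := mkfun_fun (Phi_ball : set_fun B B Phi).
have f_contr : is_contraction f.
  by exists (NngNum c0); split => // -[z z'] [/= ? ?]; exact: Phi_contr.
have [|z Bz fz] := banach_fixed_point f_contr B_closed; first by exists 0; rewrite /B /= normr0 ltW.
by exists z.
Qed.

(* The complete uniform structure and the normed structure of matrices are
   declared in different files; redeclaring completeness joins them into a
   completeNormedModType, which banach_fixed_point needs. *)
HB.instance Definition _ (R : realType) (m n : nat) :=
  Uniform_isComplete.Build 'M[R]_(m, n) (@mx_complete R m n).

Lemma inverse_of_expansive (R : realType) (V W : normedModType R) (A : set V)
    (f : V -> W) (C : R) :
  (forall x x', A x -> A x' -> `|x - x'| <= C * `|f x - f x'|) ->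
  exists g : W -> V, [/\ forall x, A x -> g (f x) = x,
    forall q, (f @` A) q -> A (g q) /\ f (g q) = q &
    forall q q', (f @` A) q -> (f @` A) q' -> `|g q - g q'| <= C * `|q - q'|].
Proof.
move=> f_exp; pose g q := xget 0 [set x | A x /\ f x = q].
have gK x : A x -> g (f x) = x.
  move=> Ax; apply: xget_unique => // x' [Ax' fx'].
  by apply/eqP; rewrite -subr_eq0 -normr_le0 (le_trans (f_exp _ _ Ax' Ax)) // fx' subrr normr0 mulr0.
exists g; split=> // [q [x Ax <-]|q q' [x Ax <-] [x' Ax' <-]]; rewrite !gK //.
exact: f_exp.
Qed.

Lemma exists_small_radius (R : realFieldType) (a b K : R) :
  0 < a -> 0 < b -> 0 <= K ->
  exists rho, [/\ 0 < rho, rho <= a, rho <= b & K * rho * 2 <= 1].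
Proof.
move=> a_gt0 b_gt0 K_ge0; set X := ((K + 1) * 2)^-1.
have XK : (K + 1) * 2 * X = 1 by rewrite mulfV // gt_eqF // mulr_gt0 ?ltr_wpDl.
have X_gt0 : 0 < X by rewrite invr_gt0 mulr_gt0 ?ltr_wpDl.
exists (Num.min (Num.min a b) X); split.
- by rewrite !lt_min a_gt0 b_gt0.
- by rewrite !ge_min lexx.
- by rewrite !ge_min lexx orbT.
- have : Num.min (Num.min a b) X <= X by rewrite ge_min lexx orbT.
  have : 0 < Num.min (Num.min a b) X by rewrite !lt_min a_gt0 b_gt0.
  nra.
Qed.

Definition box (R : realType) (k m : nat) (a b : R) : set ('rV[R]_k * 'rV[R]_m) :=
  [set p | `|p.1| < a /\ `|p.2| <= b].

Lemma row_mx0B (V : zmodType) (k m : nat) (z z' : 'rV[V]_m) :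
  row_mx (0 : 'rV[V]_k) z - row_mx 0 z' = row_mx 0 (z - z').
Proof. by rewrite opp_row_mx add_row_mx oppr0 addr0. Qed.

Lemma nbhs0_box (R : realType) (k m : nat) (a : R) :
  0 < a -> nbhs ((0 : 'rV[R]_k), (0 : 'rV[R]_m)) (box a a).
Proof.
move=> a_gt0; apply/(@nbhs_normP R _ ((0 : 'rV[R]_k), (0 : 'rV[R]_m)) (box a a)).
exists a => //= p; rewrite /ball_ /= sub0r normrN.
have -> : `|p| = Num.max `|p.1| `|p.2| by [].
by rewrite gt_max => /andP[p1 p2]; split => //; exact: ltW.
Qed.

Section local_inverse.
Variables (R : realType) (k m : nat) (G : 'rV[R]_k * 'rV[R]_m -> 'rV[R]_(k + m))
  (rho K L : R).
Hypotheses (rho_gt0 : 0 < rho) (K_ge0 : 0 <= K) (L_ge0 : 0 <= L)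
  (K_rho : K * rho * 2 <= 1).
Hypothesis G_lsubmx : forall p, box rho rho p -> lsubmx (G p) = p.1.
Hypothesis G_rsubmx : forall t z z', `|t| < rho -> `|z| <= rho -> `|z'| <= rho ->
  `|rsubmx (G (t, z) - G (t, z')) - (z - z')| <= K * `|t| * `|z - z'|.
Hypothesis G_lip : forall p p', box rho rho p -> box rho rho p' ->
  `|G p - G p'| <= L * `|p - p'|.
Hypothesis G0 : G (0, 0) = 0.

Let K_small (t : 'rV[R]_k) : `|t| < rho -> K * `|t| * 2 <= 1.
Proof. by move=> /ltW tr; apply: le_trans K_rho; rewrite ler_wpM2r // ler_wpM2l. Qed.

Let G_lip_t (t t' : 'rV[R]_k) (z : 'rV[R]_m) : `|t| < rho -> `|t'| < rho -> `|z| <= rho ->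
  `|G (t, z) - G (t', z)| <= L * `|t - t'|.
Proof.
move=> tr t'r zr; have := G_lip (p := (t, z)) (p' := (t', z)) (conj tr zr) (conj t'r zr).
have -> : `|(t, z) - (t', z)| = Num.max `|t - t'| `|z - z| by [].
by rewrite subrr normr0 max_l.
Qed.

Lemma box_expansive p p' : box rho rho p -> box rho rho p' ->
  `|p - p'| <= 2 * (1 + L) * `|G p - G p'|.
Proof.
case: p p' => [t z] [t' z'] bp bp'; case: (bp) (bp') => /= tr zr [/= t'r z'r].
set d := `|G (t, z) - G (t', z')|.
have dt : `|t - t'| <= d.
  by rewrite -[t](G_lsubmx bp) -[t'](G_lsubmx bp') -linearB lsubmx_norm_le.
set w := rsubmx (G (t, z) - G (t, z')).
have dw : `|w| <= d + L * `|t - t'|.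
  apply: le_trans (rsubmx_norm_le _) _.
  have -> : G (t, z) - G (t, z') = (G (t, z) - G (t', z')) - (G (t, z') - G (t', z')).
    by rewrite opprB addrA subrK.
  by apply: le_trans (ler_normB _ _) _; rewrite lerD // G_lip_t.
have dz : `|z - z'| <= `|w| + `|w - (z - z')|.
  by rewrite -{1}[z - z'](subKr w) ler_normB.
have := G_rsubmx tr zr z'r; rewrite -/w => dwz.
have Ldt : L * `|t - t'| <= L * d by rewrite ler_wpM2l.
have Kz : K * `|t| * `|z - z'| * 2 <= `|z - z'|.
  by rewrite mulrAC ler_piMl // K_small.
have d0 : 0 <= d := normr_ge0 _.
have Ld0 : 0 <= L * d by rewrite mulr_ge0.
have -> : `|(t, z) - (t', z')| = Num.max `|t - t'| `|z - z'| by [].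
by rewrite ge_max; apply/andP; split; lra.
Qed.

Lemma box_image_ball q : `|q| < rho / (2 * (L + 1)) -> (G @` box rho rho) q.
Proof.
rewrite ltr_pdivlMr ?mulr_gt0 ?ltr_wpDl // => q_small.
have q0 := normr_ge0 q; set t := lsubmx q.
have Lq0 := mulr_ge0 L_ge0 q0.
have tr : `|t| < rho by apply: le_lt_trans (lsubmx_norm_le q) _; lra.
pose Phi z := z - (rsubmx (G (t, z)) - rsubmx q).
have Phi_contr z z' : `|z| <= rho -> `|z'| <= rho ->
    `|Phi z - Phi z'| <= 2^-1 * `|z - z'|.
  move=> zr z'r.
  have -> : Phi z - Phi z' = - (rsubmx (G (t, z) - G (t, z')) - (z - z')).
    by apply/rowP => i; rewrite !mxE; ring.
  rewrite normrN; apply: le_trans (G_rsubmx tr zr z'r) _.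
  have := K_small tr; have := normr_ge0 (z - z'); nra.
have z0 : `|0 : 'rV[R]_m| <= rho by rewrite normr0 ltW.
have Phi0 : `|Phi 0| <= (L + 1) * `|q|.
  rewrite /Phi sub0r normrN; apply: le_trans (ler_normB _ _) _.
  have Gt0 : `|rsubmx (G (t, 0))| <= L * `|q|.
    apply: le_trans (rsubmx_norm_le _) _; rewrite -[G (t, 0)]subr0 -G0.
    have t'0 : `|0 : 'rV[R]_k| < rho by rewrite normr0.
    apply: le_trans (G_lip_t tr t'0 z0) _.
    by rewrite subr0 ler_wpM2l // lsubmx_norm_le.
  by have := rsubmx_norm_le q; lra.
have Phi_ball z : `|z| <= rho -> `|Phi z| <= rho.
  move=> zr; have := Phi_contr z 0 zr z0; rewrite subr0 => Phi_z0.
  rewrite -(subrK (Phi 0) (Phi z)); apply: le_trans (ler_normD _ _) _; lra.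
have half : 0 <= (2^-1 : R) < 1 by rewrite invr_ge0 ler0n invf_lt1 ?ltr1n.
have [z zr Phi_z] := closed_ball_fixed_point (V := 'rV[R]_m) rho_gt0 half Phi_ball Phi_contr.
exists (t, z) => //.
have /eqP := Phi_z; rewrite /Phi -subr_eq0 addrAC subrr add0r oppr_eq0 subr_eq0 => /eqP Gz.
by rewrite -[RHS]hsubmxK -[LHS]hsubmxK Gz (G_lsubmx (p := (t, z))).
Qed.

End local_inverse.

Section flow.
Variables (R : realType) (k m : nat) (O : set 'rV[R]_(k + m))
  (D : 'I_k -> 'I_m -> 'rV[R]_(k + m) -> R)
  (y : 'rV[R]_k -> 'rV[R]_(k + m) -> 'rV[R]_(k + m)) (delta r Ld Ly : R).
Hypotheses (delta_gt0 : 0 < delta) (r_gt0 : 0 < r) (Ld_ge0 : 0 <= Ld) (Ly_ge0 : 0 <= Ly).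
Hypothesis D_lip : forall i l p q, O p -> O q -> `|D i l p - D i l q| <= Ld * `|p - q|.
Hypothesis y_in : forall t x, `|t| < delta -> `|x| <= r -> O (y t x).
Hypothesis y_lip : forall p p', box delta r p -> box delta r p' ->
  `|y p.1 p.2 - y p'.1 p'.2| <= Ly * `|p - p'|.
Hypothesis y0 : forall x, `|x| <= r -> y 0 x = x.
Hypothesis y_der : forall t x j, `|t| < delta -> `|x| <= r ->
  is_derive t (delta_mx 0 j) (y^~ x) (Yfield D j (y t x)).

Lemma Yfield_lshift j i p : Yfield D j p 0 (lshift m i) = (i == j)%:R.
Proof. by rewrite /Yfield row_mxEl !mxE. Qed.

Lemma Yfield_rshift j l p : Yfield D j p 0 (rshift k l) = D j l p.
Proof. by rewrite /Yfield row_mxEr mxE. Qed.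

Lemma flow_lipschitz_x t a b : `|t| < delta -> `|a| <= r -> `|b| <= r ->
  `|y t a - y t b| <= Ly * `|a - b|.
Proof.
move=> td ar br; have := y_lip (p := (t, a)) (p' := (t, b)) (conj td ar) (conj td br).
have -> : `|(t, a) - (t, b)| = Num.max `|t - t| `|a - b| by [].
by rewrite subrr normr0 max_r.
Qed.

Lemma flow_lsubmx t x : `|t| < delta -> `|x| <= r -> lsubmx (y t x) = lsubmx x + t.
Proof.
move=> td xr; apply/rowP => i; rewrite !mxE.
have y_der_i s j : `|s| < delta -> is_derive s (delta_mx 0 j) (y^~ x) (Yfield D j (y s x))
    /\ `|Yfield D j (y s x) 0 (lshift m i) - (i == j)%:R| <= 0.
  by move=> sd; split; [exact: y_der | rewrite Yfield_lshift subrr normr0].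
have := stair_mvt (lexx 0) td y_der_i.
rewrite mulr0 normr_le0 subr_eq0 subr_eq y0 // addrC => /eqP ->.
rewrite (bigD1 i) //= eqxx mul1r big1 ?addr0 // => j ji.
by rewrite eq_sym (negbTE ji) mul0r.
Qed.

Lemma flow_rsubmx t a b : `|t| < delta -> `|a| <= r -> `|b| <= r ->
  `|rsubmx (y t a - y t b) - rsubmx (a - b)| <= k%:R * `|t| * (Ld * Ly) * `|a - b|.
Proof.
move=> td ar br; rewrite -!mulrA; apply: rV_norm_le => [|l]; first by rewrite !mulr_ge0.
have y_der_l s j : `|s| < delta ->
    is_derive s (delta_mx 0 j) (fun s => y s a - y s b)
      (Yfield D j (y s a) - Yfield D j (y s b)) /\
    `|(Yfield D j (y s a) - Yfield D j (y s b)) 0 (rshift k l) - 0| <=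
      Ld * (Ly * `|a - b|).
  move=> sd; split; first by apply: is_deriveB; exact: y_der.
  rewrite subr0 [(Yfield D j _ - _) _ _]mxE [(- Yfield D j _) _ _]mxE !Yfield_rshift.
  apply: le_trans (D_lip _ _ (y_in sd ar) (y_in sd br)) _.
  by rewrite ler_wpM2l // flow_lipschitz_x.
have := stair_mvt _ td y_der_l; rewrite big1 ?subr0 ?y0 // => [|j _]; last first.
  by rewrite mul0r.
by rewrite !mxE -mulrA; apply; rewrite !mulr_ge0.
Qed.

Lemma Gmap_lsubmx p : box delta r p -> lsubmx (Gmap y p) = p.1.
Proof.
by case: p => t z [/= td zr]; rewrite flow_lsubmx ?norm_row_mx0 // row_mxKl add0r.
Qed.

Lemma Gmap_rsubmx t z z' : `|t| < delta -> `|z| <= r -> `|z'| <= r ->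
  `|rsubmx (Gmap y (t, z) - Gmap y (t, z')) - (z - z')| <= k%:R * (Ld * Ly) * `|t| * `|z - z'|.
Proof.
move=> td zr z'r; have := flow_rsubmx td (a := row_mx 0 z) (b := row_mx 0 z').
rewrite !norm_row_mx0 row_mx0B row_mxKr norm_row_mx0 => /(_ zr z'r).
by rewrite [k%:R * `|t| * _]mulrAC.
Qed.

Lemma Gmap_lipschitz p p' : box delta r p -> box delta r p' ->
  `|Gmap y p - Gmap y p'| <= Ly * `|p - p'|.
Proof.
case: p p' => [t z] [t' z'] [/= td zr] [/= t'd z'r].
have := y_lip (p := (t, row_mx 0 z)) (p' := (t', row_mx 0 z'));
rewrite /box /= !norm_row_mx0 => /(_ (conj td zr) (conj t'd z'r)).
have -> : `|(t, row_mx (0 : 'rV[R]_k) z) - (t', row_mx 0 z')| =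
   Num.max `|t - t'| `|row_mx (0 : 'rV[R]_k) z - row_mx 0 z'| by [].
by rewrite row_mx0B norm_row_mx0.
Qed.

Lemma Gmap0 : Gmap y (0, 0) = 0.
Proof. by rewrite /Gmap row_mx0 y0 // normr0 ltW. Qed.

Lemma Gmap_local_bi_lipschitz :
  exists (U0 : set ('rV[R]_k * 'rV[R]_m)) (U1 : set 'rV[R]_(k + m)),
    [/\ nbhs ((0 : 'rV[R]_k), (0 : 'rV[R]_m)) U0,
        nbhs (0 : 'rV[R]_(k + m)) U1,
        (forall p, U0 p -> `|p.1| < delta /\ `|row_mx (0 : 'rV[R]_k) p.2| <= r),
        Gmap y @` U0 = U1 &
        exists Ginv : 'rV[R]_(k + m) -> 'rV[R]_k * 'rV[R]_m,
          [/\ (forall p, U0 p -> Ginv (Gmap y p) = p),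
              (forall q, U1 q -> U0 (Ginv q) /\ Gmap y (Ginv q) = q),
              {within U0, continuous Gmap y} /\ {within U1, continuous Ginv},
              [lipschitz Gmap y p | p in U0] &
              [lipschitz Ginv q | q in U1]]].
Proof.
have K_ge0 : 0 <= k%:R * (Ld * Ly) by rewrite !mulr_ge0.
have [rho [rho_gt0 rho_delta rho_r K_rho]] := exists_small_radius delta_gt0 r_gt0 K_ge0.
have box_sub p : box rho rho p -> box delta r p.
  by case=> p1 p2; split; [exact: lt_le_trans rho_delta | exact: le_trans rho_r].
have G_lsub p : box rho rho p -> lsubmx (Gmap y p) = p.1.
  by move=> /box_sub; exact: Gmap_lsubmx.
have G_rsub t z z' : `|t| < rho -> `|z| <= rho -> `|z'| <= rho ->
    `|rsubmx (Gmap y (t, z) - Gmap y (t, z')) - (z - z')| <=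
      k%:R * (Ld * Ly) * `|t| * `|z - z'|.
  move=> tr zr z'r; apply: Gmap_rsubmx;
    [exact: lt_le_trans rho_delta | exact: le_trans rho_r ..].
have G_lip p p' : box rho rho p -> box rho rho p' ->
    `|Gmap y p - Gmap y p'| <= Ly * `|p - p'|.
  by move=> /box_sub bp /box_sub bp'; exact: Gmap_lipschitz.
have G_exp := box_expansive K_ge0 Ly_ge0 K_rho G_lsub G_rsub G_lip.
have [Ginv [GinvK GinvR Ginv_lip]] := inverse_of_expansive G_exp.
have C_ge0 : 0 <= 2 * (1 + Ly) by rewrite mulr_ge0 ?addr_ge0.
exists (box rho rho), (Gmap y @` box rho rho); split=> //.
- exact: nbhs0_box.
- apply/(@nbhs_normP R _ (0 : 'rV[R]_(k + m)) (Gmap y @` box rho rho)).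
  have eps_gt0 : 0 < rho / (2 * (Ly + 1)) by rewrite divr_gt0 ?mulr_gt0 ?ltr_wpDl.
  exists (rho / (2 * (Ly + 1))) => //= q; rewrite /ball_ /= sub0r normrN.
  exact: box_image_ball rho_gt0 K_ge0 Ly_ge0 K_rho G_lsub G_rsub G_lip Gmap0 q.
- by move=> p /box_sub[? ?]; rewrite norm_row_mx0.
exists Ginv; split=> //.
- by split; [exact: continuous_within_of_bound Ly_ge0 G_lip |
             exact: continuous_within_of_bound C_ge0 Ginv_lip].
- exact: lipschitz_on_of_bound G_lip.
- exact: lipschitz_on_of_bound Ginv_lip.
Qed.

End flow.

Theorem proposition2p3 (R : realType) (k m : nat)
  (O : set 'rV[R]_(k + m))
  (D : 'I_k -> 'I_m -> 'rV[R]_(k + m) -> R)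
  (y : 'rV[R]_k -> 'rV[R]_(k + m) -> 'rV[R]_(k + m))
  (delta r : R) :
  (0 < m)%N ->
  open O -> O 0 ->
  (forall i l, [lipschitz D i l x | x in O]) ->
  (forall i l, D i l 0 = 0) ->
  0 < delta -> 0 < r ->
  (forall t x, `|t| < delta -> `|x| <= r -> O (y t x)) ->
  (forall x, `|x| <= r -> y 0 x = x) ->
  (forall t x (j : 'I_k), `|t| < delta -> `|x| <= r ->
     derivable (fun s => y s x) t (delta_mx 0 j) /\
     'D_(delta_mx 0 j) (fun s => y s x) t = Yfield D j (y t x)) ->
  [lipschitz y p.1 p.2 | p in [set p : 'rV[R]_k * 'rV[R]_(k + m) |
                                 `|p.1| < delta /\ `|p.2| <= r]] ->
  exists (U0 : set ('rV[R]_k * 'rV[R]_m)) (U1 : set 'rV[R]_(k + m)),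
    [/\ nbhs ((0 : 'rV[R]_k), (0 : 'rV[R]_m)) U0,
        nbhs (0 : 'rV[R]_(k + m)) U1,
        (forall p, U0 p -> `|p.1| < delta /\ `|row_mx (0 : 'rV[R]_k) p.2| <= r),
        Gmap y @` U0 = U1 &
        exists Ginv : 'rV[R]_(k + m) -> 'rV[R]_k * 'rV[R]_m,
          [/\ (forall p, U0 p -> Ginv (Gmap y p) = p),
              (forall q, U1 q -> U0 (Ginv q) /\ Gmap y (Ginv q) = q),
              {within U0, continuous Gmap y} /\
                {within U1, continuous Ginv},
              [lipschitz Gmap y p | p in U0] &
              [lipschitz Ginv q | q in U1]]].
Proof.
move=> _ _ _ D_lip _ delta_gt0 r_gt0 y_in y0 y_der y_lip.
have [Ld Ld_ge0 D_bound] :=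
  lipschitz_on_bound_fam (f := fun il : 'I_k * 'I_m => D il.1 il.2) (fun il => D_lip il.1 il.2).
have [Ly Ly_ge0 y_bound] := lipschitz_on_bound y_lip.
apply: (Gmap_local_bi_lipschitz (O := O) (Ld := Ld) (Ly := Ly)) => //.
- by move=> i l; exact: (D_bound (i, l)).
- by move=> t x j td xr; have [? ?] := y_der t x j td xr.
Qed.
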